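(* Let $OPT_{ST}=(T\cup OPT,F)$ be a feasible Steiner tree for the associated Steiner tree instance of a CacAP instance, with $|F|=|OPT|+t-1$ where $OPT$ is an optimal CacAP solution and $t=|T|$, in which every terminal has degree $1$; root it at a Steiner node $r$ adjacent to at least one terminal, and apply the random marking scheme described in the context. Let $\ell$ be a non-root Steiner node, let $\ell_q$ be the lowest proper ancestor of $\ell$ with $t(\ell_q)>0$, let $\ell=\ell_1,\ell_2,\ldots,\ell_q$ ($q\ge 2$) be the simple path from $\ell$ to $\ell_q$, and let $d_i=d(\ell_i)$. Then $$c(\ell)=\sum_{h=1}^{q-2}\frac{(d_{h+1}-1)\,H_{d_1+\cdots+d_h-h+1}}{d_2\cdots d_{h+1}}+\frac{H_{d_1+\cdots+d_{q-1}-q+2}}{d_2\cdots d_{q-1}},$$ where an empty product equals $1$.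
   Context: A cactus is a connected undirected multigraph (length-2 cycles allowed) in which every edge belongs to exactly one cycle. A CacAP instance is a cactus $G=(V,E)$ with a link set $L$; $A\subseteq L$ is feasible if $(V,E\cup A)$ is $3$-edge-connected; $OPT$ is a minimum-cardinality feasible solution. For a link $\ell=\{v_0,v_{q+1}\}$, let $v_1,\dots,v_q$ be the nodes of degree $\ge4$ other than $v_0,v_{q+1}$ lying (in order) on every simple $v_0$-$v_{q+1}$ path; the pairs $\{v_i,v_{i+1}\}$ are the projections of $\ell$, each on a distinct cycle. Two links with endpoints on a common cycle $C$ cross if they share an endpoint or a simple path along $C$ between the endpoints of one contains exactly one endpoint of the other as an internal node; general links cross if some of their projections cross. The associated Steiner tree instance $G_{ST}=(T\cup L,E_{ST})$ has terminals $T$ = degree-$2$ nodes of $G$, Steiner nodes $L$, edges $\{\ell,v\}$ for each link $\ell$ with endpoint $v\in T$, and $\{\ell,\ell'\}$ for crossing links. A feasible Steiner tree is a subtree of $G_{ST}$ containing $T$. In the rooted tree $OPT_{ST}$, for a Steiner node $\ell$, $d(\ell)$ is its number of children and $t(\ell)$ its number of terminal children. Marking scheme: independently for each Steiner node $\ell$, if $t(\ell)>0$, one terminal child $v$ of $\ell$ is chosen uniformly at random and the edge $\{\ell,v\}$ is marked; otherwise one child $\ell'$ of $\ell$ is chosen uniformly at random and $\{\ell,\ell'\}$ is marked. All other edges are unmarked. Each Steiner node $\ell$ thus has exactly one marked child edge $m(\ell)$. For an edge $e\in F$, the witness set $W(e)$ is the set of pairs of terminals $\{t',t''\}$ such that the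 simple $t'$-$t''$ path in $OPT_{ST}$ contains $e$ and exactly one unmarked edge; $w(e)=|W(e)|$. $H_i=1+\frac12+\cdots+\frac1i$ is the $i$-th harmonic number, and the cost of a Steiner node is $c(\ell)=E[H_{w(m(\ell))}]$. *)

From mathcomp Require Import all_boot all_order all_algebra.
Set Implicit Arguments. Unset Strict Implicit. Unset Printing Implicit Defensive.
Import Order.TTheory GRing.Theory Num.Theory.
Local Open Scope ring_scope.

(* The rooted Steiner tree OPT_ST is given by its vertex set V (= T u OPT),
   the terminal set T (Steiner nodes = ~: T), the root r and the parent map
   par (par r = r).  The tree edge {v, par v} (v != r) is identified with
   its lower endpoint v. *)
Section SteinerTree.
Variables (V : finType) (T : {set V}) (r : V) (par : V -> V).

Definition children (v : V) : {set V} := [set u | (u != r) && (par u == v)].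
Definition dS (v : V) : nat := #|children v|.
Definition tS (v : V) : nat := #|children v :&: T|.

(* u is an ancestor-or-self of v (depth of a tree on V is < #|V|) *)
Definition anc (u v : V) : bool := [exists n : 'I_#|V|, iter n par v == u].

Definition pathE (t1 t2 : V) : {set V} :=
  [set v | (v != r) && (anc v t1 != anc v t2)].

Definition markedE (m : {ffun V -> V}) : {set V} :=
  [set v | (v != r) && (m (par v) == v)].

Definition witness (m : {ffun V -> V}) (c : V) : {set {set V}} :=
  [set P : {set V} | [exists t1 : V, exists t2 : V,
     [&& t1 \in T, t2 \in T, t1 != t2, P == [set t1; t2],
         c \in pathE t1 t2 & #|pathE t1 t2 :\: markedE m| == 1]]].
Definition w (m : {ffun V -> V}) (c : V) : nat := #|witness m c|.

Definition allowed (l : V) : {set V} :=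
  if (0 < tS l)%N then children l :&: T else children l.

(* outcomes of the marking scheme (value on terminals fixed to be a dummy) *)
Definition valid_marking (m : {ffun V -> V}) : bool :=
  [forall v, if v \in T then m v == v else m v \in allowed v].

(* probability of an outcome: independent uniform choices at Steiner nodes *)
Definition mark_prob (R : realFieldType) (m : {ffun V -> V}) : R :=
  \prod_(l in ~: T) (#|allowed l|%:R)^-1.

Definition harm (R : realFieldType) (n : nat) : R :=
  \sum_(1 <= k < n.+1) (k%:R)^-1.

Definition cost (R : realFieldType) (l : V) : R :=
  \sum_(m : {ffun V -> V} | valid_marking m) mark_prob R m * harm R (w m (m l)).

(* d_{i+1} = d(l_{i+1}) where l_{i+1} = par^i l *)
Definition dpath (l : V) (i : nat) : nat := dS (iter i par l).

End SteinerTree.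

From mathcomp Require Import all_boot all_order all_algebra.
From mathcomp Require Import zify ring.
Set Implicit Arguments. Unset Strict Implicit. Unset Printing Implicit Defensive.
Import Order.TTheory GRing.Theory Num.Theory.

(* Following marks from any node x leads down along marked edges to a terminal
   mleaf x, and two terminals joined by marked edges only coincide.  Hence the
   terminal pairs whose path contains exactly one unmarked edge c are exactly
   {mleaf (par c), mleaf c}, and w(e) counts the unmarked edges c whose such
   path runs through e.  For e = m(l), let l_k be the highest node of
   l = l_1, l_2, ... joined to l by marked edges; k <= q - 1 because m(l_q) is
   a terminal.  The edges counted are then the edge above l_k and the unmarked
   children of l_1, ..., l_k, so w = d_1 + ... + d_k + 1 - k.  The event k >= h
   fixes the marks of l_2, ..., l_h, independent uniform choices among
   d_2, ..., d_h children, so it has probability 1 / (d_2 ... d_h); summing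
   H_w over the levels k = h gives the formula. *)

Lemma card_ffun_in (I J : finType) (F : I -> {set J}) :
  #|[set f : {ffun I -> J} | [forall i, f i \in F i]]| = \prod_(i : I) #|F i|.
Proof.
have := @card_family I (fun _ => J) (fun i => mem (F i)).
rewrite foldrE big_map big_enum /= => <-.
by apply: eq_card => f; rewrite !inE.
Qed.

Lemma sum_by_levels (X : finType) (M : nmodType) (E : nat -> {set X})
    (f : X -> M) (a : nat -> M) (j n : nat) :
  j <= n ->
  (forall h, j <= h < n -> E h.+1 \subset E h) ->
  (forall h x, j <= h < n -> x \in E h :\: E h.+1 -> f x = a h) ->
  (forall x, x \in E n -> f x = a n) ->
  (\sum_(x in E j) f x = \sum_(j <= h < n) a h *+ #|E h :\: E h.+1| + a n *+ #|E n|)%R.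
Proof.
move=> jn; move: (n - j) (subnKC jn) => k <-{n jn}.
elim: k j => [|k IH] j sub level top.
  rewrite addn0 in top *; rewrite big_geq // add0r -sumr_const; exact: eq_bigr.
have jj : j <= j < j + k.+1 by rewrite leqnn addnS ltnS leq_addr.
rewrite (big_setID (E j.+1)) /= (setIidPr (sub j jj)) big_ltn ?(andP jj).2 //.
rewrite addrC -addrA; congr (_ + _)%R.
  by rewrite -sumr_const; apply: eq_bigr => x; apply: level.
rewrite -addSnnS; apply: IH => [h hr | h x hr | x].
- by apply: sub; lia.
- by apply: level; lia.
- by rewrite addSnnS; exact: top.
Qed.

Section RootedTree.
Variables (V : finType) (T : {set V}) (r : V) (par : V -> V).
Hypothesis par_root : par r = r.
Hypothesis reach_root : forall v : V, exists n : nat, iter n par v = r.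
Hypothesis terminal_leaf : forall t u : V, t \in T -> u != r -> par u != t.

Local Notation anc := (anc par).
Local Notation pathE := (pathE r par).

Lemma iter_par_root n : iter n par r = r.
Proof. by elim: n => //= n ->. Qed.

Definition depth (v : V) : nat :=
  ex_minn (let: ex_intro n e := reach_root v in ex_intro _ n (introT eqP e)).

Lemma iter_par_eq_root n v : (iter n par v == r) = (depth v <= n).
Proof.
rewrite /depth; case: ex_minnP => d /eqP itd dmin; apply/idP/idP; first exact: dmin.
by move=> /subnK <-; rewrite iterD itd iter_par_root.
Qed.

Lemma iter_par_depth n v : depth v <= n -> iter n par v = r.
Proof. by rewrite -iter_par_eq_root => /eqP. Qed.

Lemma depth_iter n v : depth (iter n par v) = depth v - n.
Proof.
have le k : (depth (iter n par v) <= k) = (depth v - n <= k).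
  by rewrite -iter_par_eq_root -iterD iter_par_eq_root leq_subLR addnC.
by apply/eqP; rewrite eqn_leq le leqnn -le leqnn.
Qed.

Lemma depth_eq0 v : (depth v == 0) = (v == r).
Proof. by rewrite -leqn0 -iter_par_eq_root. Qed.

Lemma depth_par v : v != r -> depth v = (depth (par v)).+1.
Proof. by rewrite -depth_eq0 (depth_iter 1); lia. Qed.

Lemma par_neq v : v != r -> par v != v.
Proof. by move=> vr; apply/eqP => pv; have := depth_par vr; rewrite pv; lia. Qed.

Lemma depth_lt_card v : depth v < #|V|.
Proof.
pose f (i : 'I_(depth v).+1) := iter i par v.
have f_inj : injective f.
  move=> i j /(congr1 depth); rewrite !depth_iter => eij.
  by apply: ord_inj; have := ltn_ord i; have := ltn_ord j; lia.
by have := leq_card f f_inj; rewrite card_ord.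
Qed.

Lemma ancP u v : reflect (exists n, iter n par v = u) (anc u v).
Proof.
apply: (iffP existsP) => [[n /eqP]|[n itn]]; first by exists n.
have [lt|ge] := ltnP n #|V|; first by exists (Ordinal lt); apply/eqP.
exists (Ordinal (depth_lt_card v)); apply/eqP; rewrite /= -itn.
rewrite !iter_par_depth //; exact: leq_trans (ltnW (depth_lt_card v)) ge.
Qed.

Lemma anc_refl v : anc v v.
Proof. by apply/ancP; exists 0. Qed.

Lemma anc_par v : anc (par v) v.
Proof. by apply/ancP; exists 1. Qed.

Lemma anc_iter n v : anc (iter n par v) v.
Proof. by apply/ancP; exists n. Qed.

Lemma anc_trans u v w : anc u v -> anc v w -> anc u w.
Proof.
by move=> /ancP[a <-] /ancP[b <-]; apply/ancP; exists (a + b); rewrite iterD.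
Qed.

Lemma anc_root v : anc r v.
Proof. by apply/ancP; exists (depth v); rewrite iter_par_depth. Qed.

Lemma anc_iterE u v : anc u v -> u = iter (depth v - depth u) par v.
Proof.
move=> /ancP[n <-]; rewrite depth_iter.
have [le|lt] := leqP (depth v) n.
  by rewrite !iter_par_depth //; lia.
by congr iter; lia.
Qed.

Lemma anc_depth u v : anc u v -> depth u <= depth v.
Proof. by move=> /anc_iterE ->; rewrite depth_iter leq_subr. Qed.

Lemma anc_depth_eq u v : anc u v -> depth v <= depth u -> u = v.
Proof. by move=> uv le; rewrite [LHS](anc_iterE uv) (_ : _ - _ = 0) //; lia. Qed.

Lemma anc_antisym u v : anc u v -> anc v u -> u = v.
Proof. by move=> uv /anc_depth; apply: anc_depth_eq. Qed.

Lemma anc_total a b v : anc a v -> anc b v -> anc a b || anc b a.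
Proof.
move=> /ancP[x <-] /ancP[y <-]; apply/orP.
have [le|le] := leqP x y.
  by right; apply/ancP; exists (y - x); rewrite -iterD subnK.
by left; apply/ancP; exists (x - y); rewrite -iterD subnK // ltnW.
Qed.

Lemma anc_parE u v : v != r -> anc u v = (u == v) || anc u (par v).
Proof.
move=> vr; apply/idP/idP; last first.
  by case/orP=> [/eqP -> | /anc_trans]; [exact: anc_refl | apply; exact: anc_par].
move=> /anc_iterE ->; case: (depth v - depth u) => [|k]; first by rewrite eqxx.
by rewrite iterSr anc_iter orbT.
Qed.

Lemma anc_par_self v : v != r -> anc v (par v) = false.
Proof.
move=> vr; apply/negbTE/negP => /anc_antisym/(_ (anc_par v))/eqP.
by rewrite eq_sym (negbTE (par_neq vr)).
Qed.

Lemma child_toward z t : anc z t -> z != t ->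
  exists c, [/\ c != r, par c = z & anc c t].
Proof.
move=> /anc_iterE zt; case ek: (depth t - depth z) zt => [|k] zt; first by rewrite zt eqxx.
exists (iter k par t); rewrite anc_iter -iterS -zt; split => //.
by rewrite iter_par_eq_root -ltnNge; lia.
Qed.

Lemma anc_sibling_eq c c' v : c != r -> c' != r -> par c = par c' ->
  anc c v -> anc c' v -> c = c'.
Proof.
move=> cr c'r pc cv c'v; case/orP: (anc_total cv c'v) => [cc'|c'c].
  by move: cc'; rewrite anc_parE // -pc anc_par_self // orbF => /eqP.
by move: c'c; rewrite anc_parE // pc anc_par_self // orbF => /eqP.
Qed.

Lemma lca a b : exists z,
  [/\ anc z a, anc z b & forall y, anc y a -> anc y b -> anc y z].
Proof.
have root_common : anc r a && anc r b by rewrite !anc_root.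
case: (@arg_maxnP V r [pred y | anc y a && anc y b] depth root_common) => z /andP[za zb] zmax.
exists z; split => // y ya yb; case/orP: (anc_total ya za) => // zy.
have := zmax y; rewrite /= ya yb => /(_ isT) /(anc_depth_eq zy) ->.
exact: anc_refl.
Qed.

Lemma anc_terminal t v : t \in T -> anc t v -> v = t.
Proof.
move=> tT tv; apply/eqP; apply: contraT => vt.
have [c [cr pc _]] : exists c, [/\ c != r, par c = t & anc c v].
  by apply: child_toward tv _; rewrite eq_sym.
by move: (terminal_leaf tT cr); rewrite pc eqxx.
Qed.

Definition seg (x y : V) : {set V} := [set z | anc x z && anc z y].

Lemma seg_iter j v : seg (iter j par v) v = [set iter i par v | i : 'I_j.+1].
Proof.
apply/setP => y; rewrite inE; apply/andP/imsetP => [[jy yv] | [i _ ->]].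
  have := anc_depth jy; have := anc_depth yv; rewrite depth_iter => ? ?.
  have lt : depth v - depth y < j.+1 by lia.
  by exists (Ordinal lt); rewrite // [LHS](anc_iterE yv).
split; last exact: anc_iter.
by apply/ancP; exists (j - i); rewrite -iterD subnK // -ltnS.
Qed.

Lemma seg_setD1_notin_T x y v : v \in seg x y :\ y -> v \notin T.
Proof.
rewrite in_setD1 inE => /and3P[vy _ v_y].
by apply: contra vy => /anc_terminal/(_ v_y) ->.
Qed.

Lemma in_pathE v x y : (v \in pathE x y) = (v != r) && (anc v x != anc v y).
Proof. by rewrite inE. Qed.

Lemma pathEC x y : pathE x y = pathE y x.
Proof. by apply/setP => v; rewrite !in_pathE [anc v x == _]eq_sym. Qed.

Lemma pathEii x : pathE x x = set0.
Proof. by apply/setP => v; rewrite in_pathE eqxx andbF inE. Qed.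

Lemma in_pathE_trans x y z v :
  (v \in pathE x z) = (v \in pathE x y) (+) (v \in pathE y z).
Proof.
by rewrite !in_pathE; case: (v != r) (anc v x) (anc v y) (anc v z) => [] [] [] [].
Qed.

Lemma pathE_par v : v != r -> pathE (par v) v = [set v].
Proof.
move=> vr; apply/setP => u; rewrite in_pathE inE (anc_parE _ vr).
have [-> | uv] := eqVneq u v; first by rewrite vr anc_par_self.
by case: (anc u (par v)); rewrite andbF.
Qed.

Lemma in_pathE_anc x t v : anc x t -> (v \in pathE x t) = anc v t && ~~ anc v x.
Proof.
move=> xt; rewrite in_pathE; have [vx | nvx] := boolP (anc v x).
  by rewrite (anc_trans vx xt) andbF.
have vr : v != r by apply: contraNneq nvx => ->; exact: anc_root.
by rewrite vr andbT; case: (anc v t).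
Qed.

Lemma subset_pathE_lower x z y : anc x z -> anc z y -> pathE z y \subset pathE x y.
Proof.
move=> xz zy; apply/subsetP => v; rewrite !in_pathE_anc ?(anc_trans xz zy) //.
by case/andP=> -> nvz; apply: contra nvz => /anc_trans; apply.
Qed.

Lemma subset_pathE_upper x z y : anc x z -> anc z y -> pathE x z \subset pathE x y.
Proof.
move=> xz zy; apply/subsetP => v; rewrite !in_pathE_anc ?(anc_trans xz zy) //.
by case/andP=> vz ->; rewrite (anc_trans vz zy).
Qed.

Lemma card_children_toward v y : anc v y -> v != y ->
  #|children r par v :&: [set c | anc c y]| = 1.
Proof.
move=> vy ny; have [c [cr pc cy]] := child_toward vy ny.
apply/eqP/cards1P; exists c; apply/setP => c'; rewrite !inE.
apply/idP/eqP => [/andP[/andP[c'r /eqP pc'] c'y] | ->]; last by rewrite cr pc eqxx cy.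
by apply: anc_sibling_eq c'y cy; rewrite ?pc.
Qed.

Lemma pathE_set2 a b a' b' : [set a; b] = [set a'; b'] -> pathE a b = pathE a' b'.
Proof.
move=> E; have a'E : a' \in [set a; b] by rewrite E set21.
have b'E : b' \in [set a; b] by rewrite E set22.
have : a \in [set a'; b'] by rewrite -E set21.
have : b \in [set a'; b'] by rewrite -E set22.
move=> /set2P[] ? /set2P[] ?.
all: subst => //; try exact: pathEC.
all: by first [case/set2P: b'E => -> | case/set2P: a'E => ->].
Qed.

Lemma allowed_sub_children x : allowed T r par x \subset children r par x.
Proof. by rewrite /allowed; case: ifP => _ //; exact: subsetIl. Qed.

Section Marking.
Variable m : {ffun V -> V}.
Hypothesis m_valid : valid_marking T r par m.

Local Notation marked := (markedE r par m).

Lemma m_terminal t : t \in T -> m t = t.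
Proof. by move=> tT; move/forallP/(_ t): m_valid; rewrite tT => /eqP. Qed.

Lemma m_allowed x : x \notin T -> m x \in allowed T r par x.
Proof. by move=> xT; move/forallP/(_ x): m_valid; rewrite (negbTE xT). Qed.

Lemma m_child x : x \notin T -> m x != r /\ par (m x) = x.
Proof.
by move=> /m_allowed/(subsetP (allowed_sub_children x)); rewrite inE => /andP[-> /eqP].
Qed.

Definition mpath (x y : V) : bool := anc x y && (pathE x y \subset marked).

Definition unmarked (c : V) : bool := (c != r) && (c \notin marked).

Lemma mpath_refl x : mpath x x.
Proof. by rewrite /mpath anc_refl pathEii sub0set. Qed.

Lemma mpath_trans x y z : mpath x y -> mpath y z -> mpath x z.
Proof.
case/andP=> xy sxy /andP[yz syz]; rewrite /mpath (anc_trans xy yz) /=.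
apply/subsetP => v; rewrite (in_pathE_trans _ y).
by case: (boolP (v \in pathE x y)) => [/(subsetP sxy) ? _ | _ /(subsetP syz)].
Qed.

Lemma mpath_m x : x \notin T -> mpath x (m x).
Proof.
move=> xT; have [mr pm] := m_child xT.
by rewrite /mpath -{1 3}pm anc_par pathE_par // sub1set inE mr pm eqxx.
Qed.

Lemma mpath_lower x z y : mpath x y -> anc x z -> anc z y -> mpath z y.
Proof.
by case/andP=> _ sxy xz zy; rewrite /mpath zy (subset_trans (subset_pathE_lower xz zy)).
Qed.

Lemma notin_mpath v x y : v \notin marked -> mpath x y -> v \notin pathE x y.
Proof. by move=> vm /andP[_ /subsetP sxy]; apply: contra vm; apply: sxy. Qed.

(* Following marks strictly increases the depth until a terminal, which [m]
   fixes, is reached; [#|V|] steps therefore always end on a terminal. *)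
Definition mleaf (x : V) : V := iter #|V| m x.

Lemma mpath_iter n x : mpath x (iter n m x).
Proof.
elim: n => [|n IH]; first exact: mpath_refl.
rewrite iterS; have [yT | yT] := boolP (iter n m x \in T); first by rewrite m_terminal.
exact: mpath_trans IH (mpath_m yT).
Qed.

Lemma depth_iter_m n x : iter n m x \notin T -> depth (iter n m x) = depth x + n.
Proof.
elim: n => [|n IH]; first by rewrite addn0.
rewrite iterS; have [yT | yT] := boolP (iter n m x \in T); first by rewrite m_terminal // yT.
by have [mr pm] := m_child yT; rewrite (depth_par mr) pm IH // addnS.
Qed.

Lemma mleaf_terminal x : mleaf x \in T.
Proof.
by apply/negPn/negP => /depth_iter_m; have := depth_lt_card (mleaf x); rewrite /mleaf; lia.
Qed.

Lemma mpath_mleaf x : mpath x (mleaf x).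
Proof. exact: mpath_iter. Qed.

(* Below the lowest common ancestor z of t1 and t2, both branches of the
   path would have to start with the marked child of z. *)
Lemma terminal_marked_path_eq t1 t2 :
  t1 \in T -> t2 \in T -> pathE t1 t2 \subset marked -> t1 = t2.
Proof.
move=> t1T t2T /subsetP sub; have [z [zt1 zt2 zmax]] := lca t1 t2.
have [e | z1] := eqVneq z t1; first by subst z; rewrite (anc_terminal t1T zt2).
have [e | z2] := eqVneq z t2; first by subst z; rewrite (anc_terminal t2T zt1).
have [c1 [c1r pc1 c1t1]] := child_toward zt1 z1.
have [c2 [c2r pc2 c2t2]] := child_toward zt2 z2.
have not_common c : par c = z -> c != r -> anc c t1 -> anc c t2 = false.
  by move=> pc cr ct1; apply/negbTE/negP => /(zmax c ct1); rewrite -pc anc_par_self.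
have c1t2 := not_common c1 pc1 c1r c1t1.
have c2t1 : anc c2 t1 = false.
  by apply/negbTE/negP => c2t1; move: (not_common c2 pc2 c2r c2t1); rewrite c2t2.
have /sub : c1 \in pathE t1 t2 by rewrite in_pathE c1r c1t1 c1t2.
have /sub : c2 \in pathE t1 t2 by rewrite in_pathE c2r c2t1 c2t2.
rewrite !inE pc1 pc2 => /andP[_ /eqP mz2] /andP[_ /eqP mz1].
by move: c1t2; rewrite -mz1 mz2 c2t2.
Qed.

Lemma mleaf_unique x t : t \in T -> mpath x t -> t = mleaf x.
Proof.
move=> tT /andP[_ /subsetP sxt]; apply: terminal_marked_path_eq (mleaf_terminal x) _ => //.
have /andP[_ /subsetP sxl] := mpath_mleaf x.
apply/subsetP => v; rewrite (in_pathE_trans _ x) pathEC.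
by case: (boolP (v \in pathE x t)) => [/sxt ? _ | _ /sxl].
Qed.

Lemma mpath_mleaf_eq x y : mpath x y -> mleaf y = mleaf x.
Proof. by move=> xy; apply: mleaf_unique (mleaf_terminal y) (mpath_trans xy (mpath_mleaf y)). Qed.

Lemma in_pathE_mleaf_unmarked c v : unmarked c -> v \notin marked ->
  (v \in pathE (mleaf (par c)) (mleaf c)) = (v == c).
Proof.
move=> /andP[cr _] vm.
rewrite (in_pathE_trans _ (par c)) (in_pathE_trans (par c) c) pathE_par // in_set1.
rewrite pathEC (negbTE (notin_mpath vm (mpath_mleaf _))).
by rewrite (negbTE (notin_mpath vm (mpath_mleaf _))) addbF.
Qed.

Lemma pathE_mleaf_unmarked c :
  unmarked c -> pathE (mleaf (par c)) (mleaf c) :\: marked = [set c].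
Proof.
move=> uc; apply/setP => v; rewrite in_setD in_set1.
have [vm | vm] := boolP (v \in marked); last exact: in_pathE_mleaf_unmarked.
by apply/esym/eqP => vc; case/andP: uc => _; rewrite -vc vm.
Qed.

Lemma mleaf_par_neq c : unmarked c -> mleaf (par c) != mleaf c.
Proof.
move=> uc; apply/eqP => e; have := pathE_mleaf_unmarked uc.
by rewrite e pathEii set0D => /setP/(_ c); rewrite !inE eqxx.
Qed.

Lemma unmarked_pathE_mleaf t1 t2 c : t1 \in T -> t2 \in T ->
  pathE t1 t2 :\: marked = [set c] -> [set t1; t2] = [set mleaf (par c); mleaf c].
Proof.
have cP t t' : pathE t t' :\: marked = [set c] -> c \in pathE t t' :\: marked.
  by move=> ->; exact: set11.
move=> + + E; wlog ct2 : t1 t2 E / anc c t2 => [wl t1T t2T | t1T t2T].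
  have [ct2 | ct2] := boolP (anc c t2); first exact: wl.
  have ct1 : anc c t1.
    by move: (cP _ _ E); rewrite in_setD in_pathE (negbTE ct2) => /and3P[_ _]; case: (anc c t1).
  by rewrite setUC; apply: (wl t2 t1) => //; rewrite pathEC.
have /setDP[] := cP _ _ E; rewrite in_pathE ct2 eqb_id => /andP[cr nct1] cm.
have uc : unmarked c by rewrite /unmarked cr.
have onP v : v \notin marked -> (v \in pathE t1 t2) = (v == c).
  by move=> vm; rewrite -in_set1 -E in_setD vm.
have t2E : t2 = mleaf c.
  apply: mleaf_unique t2T _; rewrite /mpath ct2; apply/subsetP => v.
  rewrite in_pathE_anc // => /andP[vt2 nvc]; apply: contraNT nvc => vm.
  have [-> | vr] := eqVneq v r; first exact: anc_root.
  have [-> | vc] := eqVneq v c; first exact: anc_refl.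
  move: (onP v vm); rewrite in_pathE vr vt2 (negbTE vc) /= eqb_id => /negbFE vt1.
  case/orP: (anc_total vt2 ct2) => // cv.
  by move: nct1; rewrite (anc_trans cv vt1).
suff -> : t1 = mleaf (par c) by rewrite t2E.
apply: terminal_marked_path_eq t1T (mleaf_terminal _) _; apply/subsetP => v; apply: contraTT => vm.
by rewrite (in_pathE_trans _ t2) onP // t2E pathEC in_pathE_mleaf_unmarked // addbb.
Qed.

Lemma w_unmarked e :
  w T r par m e = #|[set c | unmarked c && (e \in pathE (mleaf (par c)) (mleaf c))]|.
Proof.
rewrite /w -(card_in_imset (f := fun c => [set mleaf (par c); mleaf c])); last first.
  move=> c c'; rewrite !inE => /andP[uc _] /andP[uc' _] /pathE_set2 E.
  by apply/set1_inj; rewrite -!pathE_mleaf_unmarked // E.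
apply: eq_card => P; rewrite inE; apply/existsP/imsetP.
  case=> t1 /existsP[t2 /and5P[t1T t2T _ /eqP -> /andP[et /cards1P[c E]]]].
  have /setDP[] : c \in pathE t1 t2 :\: marked by rewrite E set11.
  rewrite in_pathE => /andP[cr _] cm; have uc : unmarked c by rewrite /unmarked cr.
  have P12 := unmarked_pathE_mleaf t1T t2T E.
  by exists c; rewrite // inE uc -(pathE_set2 P12).
case=> c; rewrite inE => /andP[uc ep] ->; exists (mleaf (par c)); apply/existsP.
exists (mleaf c); rewrite !mleaf_terminal mleaf_par_neq // eqxx ep.
by rewrite pathE_mleaf_unmarked // cards1.
Qed.

Lemma marked_in_pathE_mleaf e x :
  e \in marked -> (e \in pathE x (mleaf x)) = mpath x (par e).
Proof.
rewrite inE => /andP[er /eqP me]; have /andP[xl sxl] := mpath_mleaf x.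
rewrite (in_pathE_anc _ xl); apply/andP/idP => [[el nex] | xpe].
  have xe : anc x e by case/orP: (anc_total xl el) => // ex; rewrite ex in nex.
  have xpe : anc x (par e).
    by move: xe; rewrite anc_parE // => /orP[/eqP xe | //]; rewrite xe anc_refl in nex.
  by rewrite /mpath xpe (subset_trans (subset_pathE_upper xpe (anc_trans (anc_par e) el))).
have pe_e : mpath (par e) e by rewrite /mpath anc_par pathE_par // sub1set inE er me eqxx.
have xe := mpath_trans xpe pe_e.
rewrite -(mpath_mleaf_eq xe); have /andP[-> _] := mpath_mleaf e; split => //.
by apply/negP => /anc_trans/(_ (andP xpe).1); rewrite anc_par_self.
Qed.

Lemma card_unmarked_children x : x \notin T ->
  #|[set c | unmarked c && (par c == x)]| = (dS r par x).-1.
Proof.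
move=> xT; have [mr pm] := m_child xT.
rewrite /dS (cardsD1 (m x) (children r par x)) inE mr pm eqxx /=.
apply: eq_card => c; rewrite !inE /unmarked inE.
have [<- | _] := eqVneq (par c) x; last by rewrite !andbF.
by rewrite [c == m (par c)]eq_sym; case: (c != r) (m (par c) == c) => [] [].
Qed.

Lemma mpath_toward x y : anc x y -> mpath x y = [forall v in seg x y :\ y, anc (m v) y].
Proof.
move=> xy; rewrite /mpath xy; apply/subsetP/forall_inP => [sub v | toward e].
  rewrite in_setD1 inE => /and3P[vy xv vy']; have [c [cr pc cy]] := child_toward vy' vy.
  have /sub : c \in pathE x y.
    by rewrite in_pathE_anc // cy; apply/negP => /anc_trans/(_ xv); rewrite -pc anc_par_self.
  by rewrite inE pc => /andP[_ /eqP ->].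
rewrite in_pathE_anc // => /andP[ey nex].
have er : e != r by apply: contraNneq nex => ->; exact: anc_root.
have pey : anc (par e) y := anc_trans (anc_par e) ey.
have xpe : anc x (par e).
  case/orP: (anc_total xy ey) => [| ex]; last by rewrite ex in nex.
  by rewrite anc_parE // => /orP[/eqP xe | //]; rewrite xe anc_refl in nex.
have pe_y : par e != y by apply/eqP => pe; move: ey; rewrite -pe anc_par_self.
have := toward (par e); rewrite in_setD1 inE pe_y xpe pey => /(_ isT) mey.
have peT : par e \notin T by apply: contra pe_y => /anc_terminal/(_ pey) ->.
have [mr pm] := m_child peT.
by rewrite inE er (anc_sibling_eq mr er pm mey ey) eqxx.
Qed.

Section MarkedComponent.
Variables (l top : V).
Hypotheses (l_notin_T : l \notin T) (top_unmarked : unmarked top) (top_l : mpath top l).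

Lemma mpath_seg x : mpath x l = (x \in seg top l).
Proof.
have /andP[tl stl] := top_l; rewrite inE; apply/idP/andP => [xl | [tx xl]].
  have /andP[xl' sxl] := xl; split => //; case/orP: (anc_total tl xl') => // xt.
  have [<- | xnt] := eqVneq x top; first exact: anc_refl.
  case/andP: top_unmarked => _ /negP[]; apply: (subsetP sxl).
  rewrite in_pathE_anc // tl /=; apply/negP => /(anc_antisym xt) e.
  by rewrite e eqxx in xnt.
exact: mpath_lower top_l tx xl.
Qed.

Lemma unmarked_mpath c : unmarked c -> mpath c l = (c == top).
Proof.
move=> uc; have [-> | ct] := eqVneq c top; first exact: top_l.
apply/negbTE/negP; rewrite mpath_seg inE => /andP[tc cl].
have /andP[tl /subsetP stl] := top_l.
case/andP: uc => _ /negP[]; apply: stl; rewrite in_pathE_anc // cl /=.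
by apply/negP => /(anc_antisym tc) e; rewrite e eqxx in ct.
Qed.

Lemma w_marked_child :
  w T r par m (m l) = (\sum_(x in seg top l) (dS r par x).-1).+1.
Proof.
have [mlr pml] := m_child l_notin_T.
have ml_marked : m l \in marked by rewrite inE mlr pml eqxx.
have top_par : (par top \in seg top l) = false.
  by rewrite inE anc_par_self // (andP top_unmarked).1.
have on_path c : unmarked c ->
    (m l \in pathE (mleaf (par c)) (mleaf c)) = (par c \in seg top l) || (c == top).
  move=> uc; have /andP[cr cm] := uc.
  have mlc : (m l == c) = false by apply/negbTE; apply: contraNneq cm => <-.
  rewrite (in_pathE_trans _ (par c)) (in_pathE_trans (par c) c) pathE_par // in_set1 mlc.
  rewrite [pathE (mleaf _) _]pathEC !marked_in_pathE_mleaf // pml (unmarked_mpath uc).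
  by rewrite mpath_seg; have [-> | _] := eqVneq c top; rewrite ?top_par ?addbF ?orbF.
rewrite w_unmarked.
have -> : [set c | unmarked c && (m l \in pathE (mleaf (par c)) (mleaf c))] =
          top |: [set c | unmarked c && (par c \in seg top l)].
  apply/setP => c; rewrite in_setU1 ![c \in [set _ | _]]in_set.
  have [uc | nuc] := boolP (unmarked c).
    by rewrite /= on_path // orbC.
  by rewrite /= orbF; apply/esym/negbTE; apply: contraNneq nuc => ->.
rewrite cardsU1 inE top_par andbF add1n; congr S.
rewrite -sum1_card (partition_big par (fun x => x \in seg top l)) /=; last first.
  by move=> c; rewrite inE => /andP[].
apply: eq_bigr => x xs; have xT : x \notin T.
  by apply: contra l_notin_T => xT; move: xs; rewrite inE => /andP[_ /(anc_terminal xT) ->].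
rewrite -card_unmarked_children // -sum1_card; apply: eq_bigl => c.
rewrite ![c \in [set _ | _]]in_set.
by have [-> | _] := eqVneq (par c) x; rewrite ?xs ?andbT ?andbF.
Qed.

End MarkedComponent.

End Marking.

Hypothesis steiner_child : forall v : V, v \notin T -> exists2 u : V, u != r & par u = v.

Lemma dS_gt0 v : v \notin T -> 0 < dS r par v.
Proof. by move=> /steiner_child[c cr pc]; apply/card_gt0P; exists c; rewrite inE cr pc eqxx. Qed.

Lemma allowed_gt0 v : v \notin T -> 0 < #|allowed T r par v|.
Proof. by move=> vT; rewrite /allowed; case: ifP => // _; exact: dS_gt0. Qed.

Section PathToTerminalParent.
Variables (l : V) (q : nat).
Hypotheses (l_notin_T : l \notin T) (l_neq_root : l != r) (q_ge2 : 2 <= q).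
Hypothesis top_terminal : 0 < tS T r par (iter q.-1 par l).
Hypothesis mid_no_terminal : forall i, 1 <= i < q.-1 -> tS T r par (iter i par l) = 0.

Local Notation u i := (iter i par l).
Local Notation d i := (dpath r par l i).

Lemma u_notin_T i : u i \notin T.
Proof. by apply: contra l_notin_T => uT; rewrite (anc_terminal uT (anc_iter i l)). Qed.

Lemma u_neq_root i : i < q.-1 -> u i != r.
Proof.
move=> iq; have [-> // | i_gt0] := posnP i.
apply: contraTneq top_terminal => ur.
have -> : u q.-1 = r by rewrite -(subnK (ltnW iq)) iterD ur iter_par_root.
by have := mid_no_terminal (i := i); rewrite i_gt0 iq ur => /(_ isT) ->.
Qed.

Lemma u_inj i j : i < q.-1 -> j < q.-1 -> u i = u j -> i = j.
Proof.
move=> /u_neq_root iq /u_neq_root jq /(congr1 depth); rewrite !depth_iter.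
by move: iq jq; rewrite !iter_par_eq_root -!ltnNge; lia.
Qed.

Lemma u_inj_ord h : h <= q.-1 -> injective (fun i : 'I_h => u i).
Proof.
move=> hq i j /u_inj eij; apply/ord_inj/eij; exact: leq_trans (ltn_ord _) hq.
Qed.

Lemma seg_u_setD1 h : 0 < h <= q.-1 ->
  seg (u h.-1) l :\ l = [set u i | i : 'I_h & 0 < i].
Proof.
case/andP=> h0 hq; rewrite seg_iter prednK //; apply/setP => v; rewrite in_setD1.
apply/andP/imsetP => [[vl /imsetP[i _ vi]] | [i i0 ->]].
  by exists i; rewrite // inE lt0n; apply: contra vl => /eqP i0; rewrite vi i0.
split; last by apply/imsetP; exists i.
by apply/eqP => ul; move: i0; rewrite (@u_inj_ord h hq i (Ordinal h0) ul) inE.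
Qed.

Lemma prod_seg_u h : 0 < h <= q.-1 ->
  \prod_(v in seg (u h.-1) l :\ l) dS r par v = \prod_(1 <= i < h) d i.
Proof.
move=> hq; rewrite seg_u_setD1 // big_imset /=; last first.
  by move=> i j _ _; apply: u_inj_ord; case/andP: hq.
by rewrite big_geq_mkord; apply: eq_bigl => i; rewrite inE.
Qed.

Lemma sum_seg_u h : 0 < h <= q.-1 ->
  \sum_(x in seg (u h.-1) l) (dS r par x).-1 = \sum_(i < h) (d i).-1.
Proof.
case/andP=> h0 hq; rewrite seg_iter prednK // big_imset /=; last first.
  by move=> i j _ _; apply: u_inj_ord.
by apply: eq_bigl => i; rewrite inE.
Qed.

Definition event (h : nat) : {set {ffun V -> V}} :=
  [set m | valid_marking T r par m && mpath m (u h.-1) l].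

(* [event h] is the product event: the marks of [u 1], ..., [u h.-1] point
   towards [l], all other marks are free. *)
Definition choices (h : nat) (v : V) : {set V} :=
  if v \in T then [set v]
  else if v \in seg (u h.-1) l :\ l then allowed T r par v :&: [set c | anc c l]
  else allowed T r par v.

Lemma event_choices h :
  event h = [set m : {ffun V -> V} | [forall v, m v \in choices h v]].
Proof.
apply/setP => m; rewrite !inE; apply/andP/forallP => [[mv] | mc].
  rewrite mpath_toward ?anc_iter // => /forall_inP toward v.
  move/forallP/(_ v): mv; rewrite /choices; case: (v \in T) => [/eqP -> | mv].
    exact: set11.
  by case: ifP => [/toward | _]; rewrite // inE mv inE.
have mv : valid_marking T r par m.
  apply/forallP => v; move: (mc v); rewrite /choices.
  case: (v \in T); first by move/set1P ->.
  by case: ifP => // _; rewrite inE => /andP[].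
split; rewrite // mpath_toward ?anc_iter //; apply/forall_inP => v vS.
by move: (mc v); rewrite /choices (negbTE (seg_setD1_notin_T vS)) vS !inE => /andP[].
Qed.

Lemma allowed_mid h v : 0 < h <= q.-1 -> v \in seg (u h.-1) l :\ l ->
  allowed T r par v = children r par v.
Proof.
move=> hq; rewrite seg_u_setD1 // => /imsetP[i i0 ->]; rewrite inE in i0.
by rewrite /allowed mid_no_terminal // i0 (leq_trans (ltn_ord i)) //; case/andP: hq.
Qed.

Lemma card_choices_mid h v : 0 < h <= q.-1 -> v \in seg (u h.-1) l :\ l ->
  #|choices h v| = 1.
Proof.
move=> hq vS; have /setD1P[vl] := vS; rewrite inE => /andP[_ vl'].
rewrite /choices vS (negbTE (seg_setD1_notin_T vS)) (allowed_mid hq vS).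
exact: card_children_toward.
Qed.

Lemma card_event h : 0 < h <= q.-1 ->
  #|event h| * \prod_(1 <= i < h) d i = \prod_(v in ~: T) #|allowed T r par v|.
Proof.
move=> hq; rewrite event_choices card_ffun_in -(prod_seg_u hq).
set S := seg (u h.-1) l :\ l.
rewrite [\prod_(v : V) _](bigID (mem S)) /= big1 ?mul1n; last first.
  by move=> v; apply: card_choices_mid.
rewrite [RHS](bigID (mem S)) /= mulnC; congr (_ * _).
  apply: eq_big => [v | v vS]; last by rewrite (allowed_mid hq vS).
  by apply/esym/andb_idl => /seg_setD1_notin_T; rewrite in_setC.
rewrite (bigID (mem T)) /= big1 ?mul1n; last first.
  by move=> v /andP[_ vT]; rewrite /choices vT; exact: cards1.
apply: eq_big => [v | v /andP[vS vT]]; first by rewrite in_setC andbC.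
by rewrite /choices (negbTE vT) (negbTE vS).
Qed.

Lemma par_u_pred h : 0 < h -> par (u h.-1) = u h.
Proof. by move=> h0; rewrite -iterS prednK. Qed.

Definition level_w (h : nat) : nat := \sum_(i < h) d i + 1 - h.

Lemma w_event_top m h : valid_marking T r par m -> 0 < h <= q.-1 ->
  mpath m (u h.-1) l -> u h.-1 \notin markedE r par m -> w T r par m (m l) = level_w h.
Proof.
move=> mv hq ml um; have /andP[h0 hq'] := hq.
have ur : u h.-1 != r by apply: u_neq_root; lia.
rewrite (w_marked_child mv l_notin_T (top := u h.-1)) ?/unmarked ?ur // sum_seg_u //.
have dpos i : 0 < d i := dS_gt0 (u_notin_T i).
rewrite /level_w [in RHS](eq_bigr (fun i : 'I_h => (d i).-1 + 1)); last first.
  by move=> i _; rewrite addn1 prednK.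
by rewrite big_split /= big_const_ord iter_addn_0 mul1n; lia.
Qed.

Lemma event_sub h : 0 < h -> event h.+1 \subset event h.
Proof.
move=> h0; apply/subsetP => m; rewrite !inE => /andP[-> ml] /=.
by apply: mpath_lower ml _ (anc_iter _ _); rewrite -par_u_pred // anc_par.
Qed.

Lemma w_level m h : 0 < h < q.-1 -> m \in event h :\: event h.+1 ->
  w T r par m (m l) = level_w h.
Proof.
case/andP=> h0 hq; rewrite !inE => /andP[nml /andP[mv ml]]; rewrite mv /= in nml.
apply: w_event_top => //; first by rewrite h0 ltnW.
have ur : u h.-1 != r by apply: u_neq_root; lia.
apply: contra nml => um; apply: mpath_trans ml.
by rewrite /mpath -par_u_pred // anc_par pathE_par ?sub1set.
Qed.

Lemma w_top_level m : m \in event q.-1 -> w T r par m (m l) = level_w q.-1.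
Proof.
have q1 : 0 < q.-1 by lia.
rewrite inE => /andP[mv ml]; apply: w_event_top; rewrite ?q1 ?leqnn //.
have := m_allowed mv (u_notin_T q.-1).
rewrite /allowed top_terminal inE -par_u_pred // => /andP[_ mT].
rewrite inE negb_and negbK; apply/orP; right; apply: contraTneq mT => ->.
exact: u_notin_T.
Qed.

Section Expectation.
Variable R : realFieldType.
Local Open Scope ring_scope.
Local Notation P := (\prod_(v in ~: T) #|allowed T r par v|)%N.

Lemma cost_event1 :
  cost T r par R l = (P%:R)^-1 * \sum_(m in event 1) harm R (w T r par m (m l)).
Proof.
rewrite /cost mulr_sumr; apply: eq_big => [m | m _]; first by rewrite inE /= mpath_refl andbT.
by rewrite /mark_prob natr_prod prodfV.
Qed.

Lemma event_ratio h : (0 < h <= q.-1)%N ->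
  #|event h|%:R / P%:R = (\prod_(1 <= i < h) (d i)%:R : R)^-1.
Proof.
move=> hq; have E := card_event hq.
have : (0 < #|event h| * \prod_(1 <= i < h) d i)%N.
  by rewrite E; apply: prodn_cond_gt0 => v; rewrite in_setC => /allowed_gt0.
rewrite muln_gt0 => /andP[E0 D0].
by rewrite -E natrM natr_prod invfM mulrA divff ?mul1r // pnatr_eq0 -lt0n; exact: E0.
Qed.

Lemma level_weight h : (0 < h < q.-1)%N ->
  (P%:R : R)^-1 * #|event h :\: event h.+1|%:R =
  ((d h)%:R - 1) / \prod_(1 <= i < h.+1) (d i)%:R.
Proof.
case/andP=> h0 hq; have sub := event_sub h0.
rewrite cardsD (setIidPr sub) natrB ?subset_leq_card // mulrBr.
have hq1 : (0 < h <= q.-1)%N by rewrite h0 ltnW.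
have hq2 : (0 < h.+1 <= q.-1)%N by rewrite hq.
rewrite [_ * #|event h|%:R]mulrC [_ * #|event h.+1|%:R]mulrC (event_ratio hq1) (event_ratio hq2).
have dh0 : (d h)%:R != 0 :> R by rewrite pnatr_eq0 -lt0n dS_gt0 // u_notin_T.
have D0 : \prod_(1 <= i < h) (d i)%:R != 0 :> R.
  by rewrite prodf_seq_neq0; apply/allP => i _; rewrite pnatr_eq0 -lt0n dS_gt0 // u_notin_T.
by rewrite big_nat_recr //=; field; rewrite dh0 D0.
Qed.

Lemma cost_formula :
  cost T r par R l =
    \sum_(1 <= h < q.-1)
      (((d h)%:R - 1) * harm R (level_w h) / \prod_(1 <= i < h.+1) (d i)%:R)
  + harm R (\sum_(i < q.-1) d i + 2 - q)%N / \prod_(1 <= i < q.-1) (d i)%:R.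
Proof.
have q1 : (0 < q.-1)%N by lia.
rewrite cost_event1.
rewrite (@sum_by_levels _ _ event _ (fun h => harm R (level_w h)) 1 q.-1) //; first last.
- by move=> m /w_top_level ->.
- by move=> h m hr /w_level ->.
- by move=> h /andP[h0 _]; apply: event_sub.
rewrite mulrDr mulr_sumr; congr (_ + _).
  apply: eq_big_nat => h hr.
  by rewrite -[harm R _ *+ _]mulr_natr mulrCA level_weight // mulrA [harm R _ * _]mulrC.
rewrite -[harm R _ *+ _]mulr_natr mulrCA [_^-1 * _]mulrC event_ratio ?q1 ?leqnn // /level_w.
by congr (harm R _ / _); lia.
Qed.

End Expectation.

End PathToTerminalParent.

End RootedTree.

Local Open Scope ring_scope.

Theorem lemma5 (R : realFieldType) (V : finType) (T : {set V}) (r : V)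
  (par : V -> V)
  (* rooted tree structure *)
  (Hpar_r : par r = r)
  (Hreach : forall v : V, exists n : nat, iter n par v = r)
  (* root is a Steiner node adjacent to a terminal *)
  (Hr : r \notin T)
  (Hroot_adj : exists2 t : V, t \in T & par t = r)
  (* every terminal has degree 1: it is a non-root leaf *)
  (Hterm_leaf : forall t u : V, t \in T -> u != r -> par u != t)
  (* every Steiner node has a child (marking scheme well defined) *)
  (Hsteiner_child : forall l : V, l \notin T -> exists2 u : V, u != r & par u = l)
  (* a non-root Steiner node l and its path l = l_1, ..., l_q *)
  (l : V) (Hl : l \notin T) (Hlr : l != r)
  (q : nat) (Hq : (2 <= q)%N)
  (Htq : (0 < tS T r par (iter q.-1 par l))%N)
  (Hmid : forall i : nat, (1 <= i < q.-1)%N -> tS T r par (iter i par l) = 0%N) :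
  cost T r par R l =
    \sum_(1 <= h < q.-1)
       (((dpath r par l h)%:R - 1) *
        harm R ((\sum_(i < h) dpath r par l i) + 1 - h)%N /
        \prod_(1 <= i < h.+1) (dpath r par l i)%:R)
  + harm R ((\sum_(i < q.-1) dpath r par l i) + 2 - q)%N /
        \prod_(1 <= i < q.-1) (dpath r par l i)%:R.
Proof.
exact: (cost_formula Hpar_r Hreach Hterm_leaf Hsteiner_child Hl Hlr Hq Htq Hmid R).
Qed.
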